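(* Let $D_1,D_2\subset\mathbb{C}^2$ be bounded balanced domains with Minkowski functions $\mu_1,\mu_2$ respectively. For $i=1,2$ let $L_{i,1},L_{i,2},L_{i,3}$ be three pairwise different complex lines through the origin in $\mathbb{C}^2$ (one-dimensional complex linear subspaces). Let $T:\mathbb{C}^2\to\mathbb{C}^2$ be an $\mathbb{R}$-linear map such that $\mu_1(X)=\mu_2(T(X))$ for all $X\in\mathbb{C}^2$ and $T(L_{1,1}\cup L_{1,2}\cup L_{1,3})=L_{2,1}\cup L_{2,2}\cup L_{2,3}$. Then $T$ is $\mathbb{C}$-linear or anti-$\mathbb{C}$-linear.
   Context: A domain $D\subset\mathbb{C}^n$ is balanced if $\lambda z\in D$ for all $z\in D$ and $\lambda\in\mathbb{C}$ with $|\lambda|\le 1$. Its Minkowski function is $\mu(X)=\inf\{t>0: X/t\in D\}$. An $\mathbb{R}$-linear map $T$ is anti-$\mathbb{C}$-linear if $T(\lambda X)=\bar\lambda T(X)$ for all $\lambda\in\mathbb{C}$. *)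

From Stdlib Require Import Reals.
From Coquelicot Require Export Coquelicot.
Open Scope R_scope.

(* C^2, with the product (sup-metric) uniform structure: same topology as usual. *)
Definition C2 : UniformSpace := prod_UniformSpace C_UniformSpace C_UniformSpace.

Definition c2add (X Y : C2) : C2 := (Cplus (fst X) (fst Y), Cplus (snd X) (snd Y)).
Definition c2scal (l : C) (X : C2) : C2 := (Cmult l (fst X), Cmult l (snd X)).
Definition c2zero : C2 := (RtoC 0, RtoC 0).

Definition connected_set (D : C2 -> Prop) : Prop :=
  forall U V : C2 -> Prop, open U -> open V ->
    (forall x, D x -> U x \/ V x) ->
    (forall x, D x -> U x -> V x -> False) ->
    (exists x, D x /\ U x) -> (exists x, D x /\ V x) -> False.

Definition is_domain (D : C2 -> Prop) : Prop :=
  (exists x, D x) /\ open D /\ connected_set D.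

Definition bounded_set (D : C2 -> Prop) : Prop :=
  exists M : R, forall X, D X -> Cmod (fst X) <= M /\ Cmod (snd X) <= M.

Definition balanced (D : C2 -> Prop) : Prop :=
  forall X (l : C), D X -> Cmod l <= 1 -> D (c2scal l X).

Definition minkowski (D : C2 -> Prop) (X : C2) : Rbar :=
  Glb_Rbar (fun t => 0 < t /\ D (c2scal (RtoC (/ t)) X)).

Definition complex_line (L : C2 -> Prop) : Prop :=
  exists v : C2, v <> c2zero /\ forall X, L X <-> exists l : C, X = c2scal l v.

Definition R_linear (T : C2 -> C2) : Prop :=
  (forall X Y, T (c2add X Y) = c2add (T X) (T Y)) /\
  (forall (r : R) X, T (c2scal (RtoC r) X) = c2scal (RtoC r) (T X)).

Definition C_linear (T : C2 -> C2) : Prop :=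
  (forall X Y, T (c2add X Y) = c2add (T X) (T Y)) /\
  (forall (l : C) X, T (c2scal l X) = c2scal l (T X)).

Definition anti_C_linear (T : C2 -> C2) : Prop :=
  (forall X Y, T (c2add X Y) = c2add (T X) (T Y)) /\
  (forall (l : C) X, T (c2scal l X) = c2scal (Cconj l) (T X)).

From Stdlib Require Import Reals Lra.
From Coquelicot Require Import Coquelicot.
From Stdlib Require Import FunctionalExtensionality PropExtensionality Classical.
Open Scope R_scope.

(* The Minkowski functions of bounded balanced domains are finite, absolutely
   homogeneous and positive off the origin, so the R-linear isometry T is
   injective, and if T (i X) = b T X then |b| = 1 and |1 + b| = |1 + i|, i.e.
   b = i or b = -i.  When T X spans one of the image lines, T X, T (i X) and
   T X +- T (i X) all lie in the union of the three lines, which forces T (i X)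
   onto the line of T X; thus T is C-linear or anti-C-linear on each of the
   three preimage lines.  Expanding a vector of the third image line in the
   basis formed by the first two shows that the three choices agree, and the
   same expansion of an arbitrary vector makes T globally (anti-)C-linear. *)

Lemma c2_ext (X Y : C2) : @eq C (fst X) (fst Y) -> @eq C (snd X) (snd Y) -> X = Y.
Proof. destruct X, Y; simpl; intros; subst; auto. Qed.

Ltac c2ring := apply c2_ext; cbn [fst snd c2add c2scal c2zero]; ring.

Definition c2sub (X Y : C2) : C2 := c2add X (c2scal (-1)%C Y).

Lemma c2scal_scal (a b : C) (X : C2) : c2scal a (c2scal b X) = c2scal (a * b)%C X.
Proof. c2ring. Qed.

Lemma c2scal0 (X : C2) : c2scal 0%C X = c2zero.
Proof. c2ring. Qed.

Lemma c2scal1 (X : C2) : c2scal 1%C X = X.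
Proof. c2ring. Qed.

Lemma c2scal_zero (c : C) : c2scal c c2zero = c2zero.
Proof. c2ring. Qed.

Lemma c2sub_eq0 (X Y : C2) : c2sub X Y = c2zero -> X = Y.
Proof.
  intros H. replace X with (c2add (c2sub X Y) Y) by (unfold c2sub; c2ring).
  rewrite H. c2ring.
Qed.

Lemma Cmult_sub_eq0 (x y a : C) : a <> 0%C -> ((x - y) * a)%C = 0%C -> x = y.
Proof.
  intros Ha H. destruct (Ceq_dec (x - y) 0) as [E | E].
  - replace x with ((x - y) + y)%C by ring. rewrite E. ring.
  - exfalso. exact (Cmult_neq_0 _ _ E Ha H).
Qed.

Lemma Cmod_Ci : Cmod Ci = 1.
Proof. unfold Cmod, Ci; cbn [fst snd]. replace (0 ^ 2 + 1 ^ 2) with 1 by ring. apply sqrt_1. Qed.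

Lemma ball0_scal (eps : posreal) (t : R) (z : C) :
  0 < t -> Cmod z < eps * t -> ball (0 : C) eps (RtoC (/ t) * z)%C.
Proof.
  intros Ht Hz. apply (norm_compat1 (K := C_AbsRing) (V := C_NormedModule)).
  change (Cmod (RtoC (/ t) * z - 0)%C < eps).
  replace (RtoC (/ t) * z - 0)%C with (RtoC (/ t) * z)%C by ring.
  rewrite Cmod_mult, Cmod_R, Rabs_pos_eq by (apply Rlt_le, Rinv_0_lt_compat; lra).
  apply (Rmult_lt_reg_l t); [lra|]. rewrite <- Rmult_assoc, Rinv_r by lra. lra.
Qed.

Lemma Cmod_le_of_scal_inv (z : C) (M t : R) :
  0 < t -> Cmod (RtoC (/ t) * z)%C <= M -> Cmod z <= M * t.
Proof.
  intros Ht H. rewrite Cmod_mult, Cmod_R, Rabs_pos_eq in H by (apply Rlt_le, Rinv_0_lt_compat; lra).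
  apply (Rmult_le_compat_r t) in H; [| lra].
  replace (/ t * Cmod z * t) with (Cmod z) in H by (field; lra). exact H.
Qed.

Lemma is_glb_Rbar_scal (P : R -> Prop) (r g : R) : 0 < r -> is_glb_Rbar P (Finite g) ->
  is_glb_Rbar (fun t => P (t / r)) (Finite (r * g)).
Proof.
  intros Hr [Hlb Hgr].
  assert (Hdiv : forall t, r * (t / r) = t) by (intros; field; lra).
  assert (Hmul : forall x, P x -> P (r * x / r)) by (intros x; replace (r * x / r) with x by (field; lra); auto).
  split.
  - intros t Ht. specialize (Hlb _ Ht). simpl in *. rewrite <- (Hdiv t).
    apply Rmult_le_compat_l; lra.
  - intros [b | |] Hb; simpl; trivial.
    + assert (Hl : is_lb_Rbar P (Finite (b / r))).
      { intros x Hx. specialize (Hb _ (Hmul _ Hx)). simpl in *.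
        apply (Rmult_le_reg_l r); [lra|]. rewrite Hdiv. exact Hb. }
      specialize (Hgr _ Hl). simpl in Hgr. rewrite <- (Hdiv b). apply Rmult_le_compat_l; lra.
    + apply (Hgr p_infty). intros x Hx. exact (Hb _ (Hmul _ Hx)).
Qed.

Definition gauge_set (D : C2 -> Prop) (X : C2) (t : R) : Prop :=
  0 < t /\ D (c2scal (RtoC (/ t)) X).

Definition gauge (D : C2 -> Prop) (X : C2) : R := real (minkowski D X).

Section Minkowski.

Variable D : C2 -> Prop.
Hypotheses (D_domain : is_domain D) (D_bounded : bounded_set D) (D_balanced : balanced D).

Lemma balanced_zero : D c2zero.
Proof.
  destruct D_domain as [[X HX] _].
  rewrite <- (c2scal0 X). apply D_balanced; auto. rewrite Cmod_0; lra.
Qed.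

Lemma balanced_unit (u : C) (X : C2) : Cmod u = 1 -> D (c2scal u X) -> D X.
Proof.
  intros Hu H. replace X with (c2scal (Cconj u) (c2scal u X)).
  - apply D_balanced; auto. rewrite Cmod_conj; lra.
  - rewrite c2scal_scal, Cmult_comm, <- Cmod2_conj, Hu.
    rewrite pow1. apply c2scal1.
Qed.

Lemma gauge_set_inhabited (X : C2) : exists t, gauge_set D X t.
Proof.
  destruct D_domain as [_ [D_open _]].
  destruct (D_open _ balanced_zero) as [eps Heps].
  pose proof (cond_pos eps).
  set (K := Cmod (fst X) + Cmod (snd X) + 1).
  assert (Hfst : Cmod (fst X) < K) by (pose proof (Cmod_ge_0 (snd X)); unfold K; lra).
  assert (Hsnd : Cmod (snd X) < K) by (pose proof (Cmod_ge_0 (fst X)); unfold K; lra).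
  assert (Ht : 0 < K / eps) by (apply Rdiv_lt_0_compat; pose proof (Cmod_ge_0 (fst X)); lra).
  exists (K / eps). split; [exact Ht|].
  apply Heps. split; apply ball0_scal; auto;
    replace (pos eps * (K / eps)) with K by (field; lra); assumption.
Qed.

Lemma gauge_set_bounded_below (X : C2) :
  X <> c2zero -> exists m, 0 < m /\ forall t, gauge_set D X t -> m <= t.
Proof.
  intros HX. destruct D_bounded as [M HM].
  set (n := Cmod (fst X) + Cmod (snd X)).
  assert (Hn : 0 < n).
  { pose proof (Cmod_ge_0 (fst X)); pose proof (Cmod_ge_0 (snd X)).
    destruct (Req_dec (Cmod (fst X)) 0) as [E1 | E1]; [| unfold n; lra].
    destruct (Req_dec (Cmod (snd X)) 0) as [E2 | E2]; [| unfold n; lra].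
    exfalso. apply HX, c2_ext; apply Cmod_eq_0; assumption. }
  assert (Hbound : forall t, gauge_set D X t -> n <= 2 * M * t).
  { intros t [Ht HDt]. destruct (HM _ HDt) as [H1 H2].
    apply Cmod_le_of_scal_inv in H1, H2; auto. unfold n. lra. }
  destruct gauge_set_inhabited with X as [t0 Ht0].
  assert (HM0 : 0 < M) by (pose proof (Hbound _ Ht0); destruct Ht0; nra).
  exists (n / (2 * M)). split; [apply Rdiv_lt_0_compat; lra|].
  intros t Ht. apply (Rmult_le_reg_r (2 * M)); [lra|].
  replace (n / (2 * M) * (2 * M)) with n by (field; lra).
  rewrite Rmult_comm. auto.
Qed.

Lemma is_glb_gauge (X : C2) : is_glb_Rbar (gauge_set D X) (Finite (gauge D X)).
Proof.
  unfold gauge, minkowski. pose proof (Glb_Rbar_correct (gauge_set D X)) as Hglb.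
  destruct (gauge_set_inhabited X) as [t0 Ht0].
  assert (Hup : Rbar_le (Glb_Rbar (gauge_set D X)) t0) by (apply Hglb; auto).
  assert (Hlow : Rbar_le 0 (Glb_Rbar (gauge_set D X))).
  { apply Hglb. intros t [Ht _]. simpl. lra. }
  unfold gauge_set in *. destruct (Glb_Rbar _); simpl in *; tauto.
Qed.

Lemma gauge_pos (X : C2) : X <> c2zero -> 0 < gauge D X.
Proof.
  intros HX. destruct (gauge_set_bounded_below X HX) as [m [Hm Hlb]].
  apply Rlt_le_trans with m; auto. exact (proj2 (is_glb_gauge X) (Finite m) Hlb).
Qed.

Lemma gauge_set_scal (c : C) (X : C2) (t : R) : c <> 0%C ->
  gauge_set D (c2scal c X) t <-> gauge_set D X (t / Cmod c).
Proof.
  intros Hc. pose proof (proj1 (Cmod_gt_0 c) Hc) as Hmod.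
  set (u := (c * RtoC (/ Cmod c))%C).
  assert (Hu : Cmod u = 1).
  { unfold u. rewrite Cmod_mult, Cmod_R, Rabs_pos_eq by (apply Rlt_le, Rinv_0_lt_compat; lra).
    field. lra. }
  assert (Hpos : 0 < t <-> 0 < t / Cmod c).
  { split; intros H; [apply Rdiv_lt_0_compat; lra|].
    replace t with (t / Cmod c * Cmod c) by (field; lra). nra. }
  assert (Hscal : 0 < t -> c2scal (RtoC (/ t)) (c2scal c X)
                         = c2scal u (c2scal (RtoC (/ (t / Cmod c))) X)).
  { intros Ht. rewrite !c2scal_scal. f_equal. unfold u. destruct c as [a b].
    apply injective_projections; simpl; field; lra. }
  unfold gauge_set. split; intros [Ht HDt]; split; try tauto.
  - rewrite Hscal in HDt by exact Ht. exact (balanced_unit _ _ Hu HDt).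
  - rewrite Hscal by tauto. apply D_balanced; [exact HDt | lra].
Qed.

Lemma gauge_scal (c : C) (X : C2) : gauge D (c2scal c X) = Cmod c * gauge D X.
Proof.
  assert (Hnz : forall (c : C) (Y : C2), c <> 0%C -> gauge D (c2scal c Y) = Cmod c * gauge D Y).
  { intros c' Y Hc. pose proof (proj1 (Cmod_gt_0 c') Hc) as Hmod.
    pose proof (is_glb_Rbar_scal _ _ _ Hmod (is_glb_gauge Y)) as Hglb.
    apply (is_glb_Rbar_eqset _ (gauge_set D (c2scal c' Y))) in Hglb;
      [| intros t; apply gauge_set_scal; exact Hc].
    change (real (Glb_Rbar (gauge_set D (c2scal c' Y))) = Cmod c' * gauge D Y).
    rewrite (is_glb_Rbar_unique _ _ Hglb). reflexivity. }
  destruct (Ceq_dec c 0) as [-> | Hc]; [| auto].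
  (* [0 = 2 * 0] forces the gauge of the origin to vanish *)
  assert (H2 : RtoC 2 <> 0%C) by (intros E; injection E; lra).
  pose proof (Hnz _ c2zero H2) as E. rewrite c2scal_zero, Cmod_R, Rabs_pos_eq in E by lra.
  rewrite c2scal0, Cmod_0. lra.
Qed.

End Minkowski.

Definition cconj_if (b : bool) (c : C) : C := if b then Cconj c else c.

Lemma cconj_if_invol (b : bool) (c : C) : cconj_if b (cconj_if b c) = c.
Proof. destruct b; simpl; auto using Cconj_conj. Qed.

Lemma cconj_if_mult (b : bool) (c d : C) : cconj_if b (c * d)%C = (cconj_if b c * cconj_if b d)%C.
Proof. destruct b; simpl; auto using Cmult_conj. Qed.

Lemma cconj_if_real (b : bool) (r : R) : cconj_if b (RtoC r) = RtoC r.
Proof. destruct b; simpl; auto. apply injective_projections; simpl; ring. Qed.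

Lemma cconj_if_Ci_inj (b1 b2 : bool) : cconj_if b1 Ci = cconj_if b2 Ci -> b1 = b2.
Proof. destruct b1, b2; simpl; auto; intros E; injection E; lra. Qed.

Lemma c2scal_Re_Im (c : C) (X : C2) :
  c2scal c X = c2add (c2scal (RtoC (Re c)) X) (c2scal (RtoC (Im c)) (c2scal Ci X)).
Proof.
  destruct c as [a b], X as [[x1 y1] [x2 y2]].
  apply c2_ext; apply injective_projections; simpl; ring.
Qed.

Lemma c2scal_cconj_if (b : bool) (c : C) (v : C2) :
  c2scal (cconj_if b c) v
  = c2add (c2scal (RtoC (Re c)) v) (c2scal (RtoC (Im c)) (c2scal (cconj_if b Ci) v)).
Proof.
  destruct b, c as [a b], v as [[x1 y1] [x2 y2]];
    apply c2_ext; apply injective_projections; simpl; ring.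
Qed.

Section RLinear.

Variable T : C2 -> C2.
Hypothesis T_Rlin : R_linear T.

Lemma Rlin_add (X Y : C2) : T (c2add X Y) = c2add (T X) (T Y).
Proof. apply T_Rlin. Qed.

Lemma Rlin_real (r : R) (X : C2) : T (c2scal (RtoC r) X) = c2scal (RtoC r) (T X).
Proof. apply T_Rlin. Qed.

Lemma Rlin_sub (X Y : C2) : T (c2sub X Y) = c2sub (T X) (T Y).
Proof. unfold c2sub. rewrite Rlin_add, Rlin_real. reflexivity. Qed.

Lemma Rlin_zero : T c2zero = c2zero.
Proof. rewrite <- (c2scal0 c2zero) at 1. rewrite Rlin_real. apply c2scal0. Qed.

Lemma Rlin_scal (c : C) (X : C2) :
  T (c2scal c X) = c2add (c2scal (RtoC (Re c)) (T X)) (c2scal (RtoC (Im c)) (T (c2scal Ci X))).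
Proof. rewrite c2scal_Re_Im, Rlin_add, !Rlin_real. reflexivity. Qed.

End RLinear.

Definition c2_subspace (A : C2 -> Prop) : Prop :=
  (forall X Y, A X -> A Y -> A (c2add X Y)) /\ (forall (c : C) X, A X -> A (c2scal c X)).

Definition meet_trivially (A B : C2 -> Prop) : Prop := forall Y, A Y -> B Y -> Y = c2zero.

Definition union3 (L1 L2 L3 : C2 -> Prop) (X : C2) : Prop := L1 X \/ L2 X \/ L3 X.

Lemma complex_line_subspace (L : C2 -> Prop) : complex_line L -> c2_subspace L.
Proof.
  intros [v [_ HL]]. split.
  - intros X Y HX HY. apply HL in HX as [a ->]. apply HL in HY as [b ->].
    apply HL. exists (a + b)%C. c2ring.
  - intros c X HX. apply HL in HX as [a ->]. apply HL. exists (c * a)%C. c2ring.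
Qed.

Lemma complex_line_nonzero (L : C2 -> Prop) : complex_line L -> exists v, L v /\ v <> c2zero.
Proof. intros [v [Hv HL]]. exists v. split; auto. apply HL. exists 1%C. symmetry; apply c2scal1. Qed.

Lemma complex_line_coord (L : C2 -> Prop) (v Z : C2) :
  complex_line L -> L v -> v <> c2zero -> L Z -> exists b, Z = c2scal b v.
Proof.
  intros [w [_ HL]] Hv Hv0 HZ.
  apply HL in Hv as [a Ha]. apply HL in HZ as [z Hz].
  assert (Ha0 : a <> 0%C) by (intros E; apply Hv0; rewrite Ha, E; apply c2scal0).
  exists (z / a)%C. rewrite Hz, Ha, c2scal_scal. f_equal. field. auto.
Qed.

Lemma complex_line_meet (L L' : C2 -> Prop) :
  complex_line L -> complex_line L' -> L <> L' -> meet_trivially L L'.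
Proof.
  intros HL HL' Hne Y HY HY'. apply NNPP. intros HY0. apply Hne.
  apply functional_extensionality; intros X; apply propositional_extensionality.
  split; intros HX.
  - destruct (complex_line_coord L Y X HL HY HY0 HX) as [b ->].
    apply complex_line_subspace; auto.
  - destruct (complex_line_coord L' Y X HL' HY' HY0 HX) as [b ->].
    apply complex_line_subspace; auto.
Qed.

Lemma union3_sum_diff_of_second (L1 L2 L3 : C2 -> Prop) (Y Z : C2) :
  c2_subspace L1 -> c2_subspace L2 -> c2_subspace L3 ->
  meet_trivially L1 L2 -> meet_trivially L1 L3 ->
  L1 Y -> Y <> c2zero -> L2 Z ->
  union3 L1 L2 L3 (c2add Y Z) -> union3 L1 L2 L3 (c2sub Y Z) -> L1 Z.
Proof.
  intros [add1 scal1] [add2 scal2] [add3 scal3] m12 m13 HY HY0 HZ Hp Hm.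
  destruct Hp as [Hp | [Hp | Hp]].
  - replace Z with (c2add (c2add Y Z) (c2scal (-1)%C Y)) by c2ring. auto.
  - exfalso. apply HY0, m12; auto.
    replace Y with (c2add (c2add Y Z) (c2scal (-1)%C Z)) by c2ring. auto.
  - destruct Hm as [Hm | [Hm | Hm]].
    + replace Z with (c2scal (-1)%C (c2add (c2sub Y Z) (c2scal (-1)%C Y)))
        by (unfold c2sub; c2ring). auto.
    + exfalso. apply HY0, m12; auto.
      replace Y with (c2add (c2sub Y Z) Z) by (unfold c2sub; c2ring). auto.
    + exfalso. apply HY0, m13; auto.
      replace Y with (c2scal (/ 2)%C (c2add (c2add Y Z) (c2sub Y Z)))
        by (unfold c2sub; apply c2_ext; cbn [fst snd c2add c2scal]; field). auto.
Qed.

Lemma union3_sum_diff (L1 L2 L3 : C2 -> Prop) (Y Z : C2) :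
  c2_subspace L1 -> c2_subspace L2 -> c2_subspace L3 ->
  meet_trivially L1 L2 -> meet_trivially L1 L3 ->
  L1 Y -> Y <> c2zero -> union3 L1 L2 L3 Z ->
  union3 L1 L2 L3 (c2add Y Z) -> union3 L1 L2 L3 (c2sub Y Z) -> L1 Z.
Proof.
  intros sub1 sub2 sub3 m12 m13 HY HY0 [HZ | [HZ | HZ]] Hp Hm; auto.
  - apply (union3_sum_diff_of_second L1 L2 L3 Y Z); auto.
  - apply (union3_sum_diff_of_second L1 L3 L2 Y Z); auto; unfold union3 in *; tauto.
Qed.

Definition c2det (v w : C2) : C := (fst v * snd w - snd v * fst w)%C.

Lemma cramer_2x2 (a1 a2 b1 b2 y1 y2 : C) : (a1 * b2 - a2 * b1)%C <> 0%C ->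
  let d := (a1 * b2 - a2 * b1)%C in
  y1 = ((y1 * b2 - y2 * b1) / d * a1 + (a1 * y2 - a2 * y1) / d * b1)%C /\
  y2 = ((y1 * b2 - y2 * b1) / d * a2 + (a1 * y2 - a2 * y1) / d * b2)%C.
Proof. intros Hd d. unfold d. split; field; exact Hd. Qed.

Lemma c2det_decomp (v1 v2 Y : C2) : c2det v1 v2 <> 0%C ->
  Y = c2add (c2scal (c2det Y v2 / c2det v1 v2)%C v1) (c2scal (c2det v1 Y / c2det v1 v2)%C v2).
Proof.
  intros Hd. destruct (cramer_2x2 (fst v1) (snd v1) (fst v2) (snd v2) (fst Y) (snd Y) Hd) as [E1 E2].
  apply c2_ext; assumption.
Qed.

Lemma c2det_indep (v1 v2 : C2) (p q : C) : c2det v1 v2 <> 0%C ->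
  c2add (c2scal p v1) (c2scal q v2) = c2zero -> p = 0%C /\ q = 0%C.
Proof.
  intros Hd H.
  assert (Ep : (p * c2det v1 v2)%C = c2det (c2add (c2scal p v1) (c2scal q v2)) v2)
    by (unfold c2det; cbn [fst snd c2add c2scal]; ring).
  assert (Eq : (q * c2det v1 v2)%C = c2det v1 (c2add (c2scal p v1) (c2scal q v2)))
    by (unfold c2det; cbn [fst snd c2add c2scal]; ring).
  rewrite H in Ep, Eq.
  replace (c2det c2zero v2) with (RtoC 0) in Ep by (unfold c2det; cbn [fst snd c2zero]; ring).
  replace (c2det v1 c2zero) with (RtoC 0) in Eq by (unfold c2det; cbn [fst snd c2zero]; ring).
  split; apply NNPP; intros Hne; [apply (Cmult_neq_0 p _ Hne Hd) | apply (Cmult_neq_0 q _ Hne Hd)]; auto.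
Qed.

Lemma colinear_of_det0 (a b x y : C) :
  (a <> 0%C \/ b <> 0%C) -> (a * y - b * x)%C = 0%C -> exists c, x = (c * a)%C /\ y = (c * b)%C.
Proof.
  intros Hab Hd.
  assert (Hbx : (b * x)%C = (a * y)%C).
  { replace (b * x)%C with (a * y - (a * y - b * x))%C by ring. rewrite Hd. ring. }
  destruct (Ceq_dec a 0) as [-> | Ha].
  - destruct Hab as [Ha | Hb]; [contradiction|].
    rewrite Cmult_0_l in Hbx.
    exists (y / b)%C. split; [| field; exact Hb].
    replace x with (b * x / b)%C by (field; exact Hb). rewrite Hbx. field; exact Hb.
  - exists (x / a)%C. split; [field; exact Ha|].
    replace y with (a * y / a)%C by (field; exact Ha). rewrite <- Hbx. field; exact Ha.
Qed.

Lemma c2det_eq0_colinear (v w : C2) : v <> c2zero -> c2det v w = 0%C -> exists c, w = c2scal c v.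
Proof.
  intros Hv Hd.
  assert (Hv' : fst v <> RtoC 0 \/ snd v <> RtoC 0).
  { apply NNPP. intros H. apply Hv, c2_ext; apply NNPP; tauto. }
  destruct (colinear_of_det0 _ _ (fst w) (snd w) Hv' Hd) as [c [E1 E2]].
  exists c. apply c2_ext; assumption.
Qed.

Lemma complex_line_det (L L' : C2 -> Prop) (v w : C2) :
  complex_line L -> complex_line L' -> L <> L' -> L v -> L' w -> v <> c2zero -> w <> c2zero ->
  c2det v w <> 0%C.
Proof.
  intros HL HL' Hne Hv Hw Hv0 Hw0 Hd. apply Hw0.
  destruct (c2det_eq0_colinear v w Hv0 Hd) as [c ->].
  apply (complex_line_meet L L'); auto. apply complex_line_subspace; auto.
Qed.

Lemma unit_Ci_or_conj (b : C) :
  Cmod b = 1 -> Cmod (1 + b)%C = Cmod (1 + Ci)%C -> b = Ci \/ b = Cconj Ci.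
Proof.
  destruct b as [p q]. unfold Cmod, Cplus, Ci, Cconj, RtoC; cbn [fst snd]. intros H1 H2.
  assert (E1 : p ^ 2 + q ^ 2 = 1).
  { rewrite <- (sqrt_sqrt (p ^ 2 + q ^ 2)) by nra. rewrite H1. ring. }
  assert (E2 : (1 + p) ^ 2 + (0 + q) ^ 2 = 2).
  { rewrite <- (sqrt_sqrt ((1 + p) ^ 2 + (0 + q) ^ 2)) by nra. rewrite H2, sqrt_sqrt by nra. ring. }
  assert (Hp : p = 0) by nra. subst p.
  assert (Hq : (q - 1) * (q + 1) = 0) by nra.
  apply Rmult_integral in Hq as [Hq | Hq]; [left | right]; apply injective_projections; simpl; lra.
Qed.

Section Isometry.

Variables (N1 N2 : C2 -> R) (T : C2 -> C2).
Hypotheses (N1_scal : forall (c : C) (X : C2), N1 (c2scal c X) = Cmod c * N1 X)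
           (N2_scal : forall (c : C) (X : C2), N2 (c2scal c X) = Cmod c * N2 X)
           (N1_pos : forall X : C2, X <> c2zero -> 0 < N1 X)
           (T_Rlin : R_linear T)
           (T_iso : forall X : C2, N1 X = N2 (T X)).

Lemma iso_inj (X Y : C2) : T X = T Y -> X = Y.
Proof.
  intros E. apply c2sub_eq0, NNPP. intros Hne. pose proof (N1_pos _ Hne) as H.
  rewrite T_iso, Rlin_sub, E in H by exact T_Rlin.
  replace (c2sub (T Y) (T Y)) with (c2scal 0%C (T Y)) in H by (unfold c2sub; c2ring).
  rewrite N2_scal, Cmod_0 in H. lra.
Qed.

Lemma iso_image_Ci (b : C) (X : C2) :
  T X <> c2zero -> T (c2scal Ci X) = c2scal b (T X) -> b = Ci \/ b = Cconj Ci.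
Proof.
  intros HX Hi.
  assert (Hg : 0 < N1 X).
  { apply N1_pos. intros ->. apply HX, Rlin_zero, T_Rlin. }
  assert (E1 := T_iso (c2scal Ci X)).
  rewrite Hi, N1_scal, N2_scal, <- T_iso, Cmod_Ci in E1.
  assert (E2 := T_iso (c2scal (1 + Ci)%C X)).
  replace (c2scal (1 + Ci)%C X) with (c2add X (c2scal Ci X)) in E2 at 2 by c2ring.
  rewrite Rlin_add, Hi in E2 by exact T_Rlin.
  replace (c2add (T X) (c2scal b (T X))) with (c2scal (1 + b)%C (T X)) in E2 by c2ring.
  rewrite N1_scal, N2_scal, <- T_iso in E2.
  apply unit_Ci_or_conj; nra.
Qed.

Lemma iso_line_twist (U L1 L2 L3 : C2 -> Prop) (v : C2) :
  (forall (c : C) (X : C2), U X -> U (c2scal c X)) ->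
  complex_line L1 -> complex_line L2 -> complex_line L3 -> L1 <> L2 -> L1 <> L3 ->
  (forall Y, union3 L1 L2 L3 Y <-> exists X, U X /\ T X = Y) ->
  L1 v -> v <> c2zero ->
  exists X s, forall c, T (c2scal c X) = c2scal (cconj_if s c) v.
Proof.
  intros HU l1 l2 l3 n12 n13 Himg Hv Hv0.
  destruct (proj1 (Himg v) (or_introl Hv)) as [X [HUX HX]].
  assert (HZ : union3 L1 L2 L3 (T (c2scal Ci X))) by (apply Himg; eauto).
  assert (Hp : union3 L1 L2 L3 (c2add v (T (c2scal Ci X)))).
  { apply Himg. exists (c2scal (1 + Ci)%C X). split; auto.
    rewrite <- HX, <- Rlin_add by exact T_Rlin. f_equal. c2ring. }
  assert (Hm : union3 L1 L2 L3 (c2sub v (T (c2scal Ci X)))).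
  { apply Himg. exists (c2scal (1 - Ci)%C X). split; auto.
    rewrite <- HX, <- Rlin_sub by exact T_Rlin. f_equal. unfold c2sub. c2ring. }
  assert (HZ1 : L1 (T (c2scal Ci X))).
  { apply (union3_sum_diff L1 L2 L3 v); auto using complex_line_subspace, complex_line_meet. }
  destruct (complex_line_coord L1 v _ l1 Hv Hv0 HZ1) as [b Hb].
  rewrite <- HX in Hb, Hv0.
  assert (Hs : exists s, b = cconj_if s Ci).
  { destruct (iso_image_Ci b X Hv0 Hb) as [-> | ->]; [exists false | exists true]; reflexivity. }
  destruct Hs as [s ->]. exists X, s. intros c.
  rewrite Rlin_scal, Hb, HX by exact T_Rlin. symmetry. apply c2scal_cconj_if.
Qed.

Lemma twisted_comb (s1 s2 : bool) (X1 X2 v1 v2 : C2) (p q : C) :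
  (forall c, T (c2scal c X1) = c2scal (cconj_if s1 c) v1) ->
  (forall c, T (c2scal c X2) = c2scal (cconj_if s2 c) v2) ->
  T (c2add (c2scal p X1) (c2scal q X2))
  = c2add (c2scal (cconj_if s1 p) v1) (c2scal (cconj_if s2 q) v2).
Proof. intros F1 F2. rewrite Rlin_add, F1, F2 by exact T_Rlin. reflexivity. Qed.

Lemma iso_twists_agree (s1 s2 s3 : bool) (X1 X2 X3 v1 v2 v3 : C2) :
  (forall c, T (c2scal c X1) = c2scal (cconj_if s1 c) v1) ->
  (forall c, T (c2scal c X2) = c2scal (cconj_if s2 c) v2) ->
  (forall c, T (c2scal c X3) = c2scal (cconj_if s3 c) v3) ->
  c2det v1 v2 <> 0%C -> (forall a, v3 <> c2scal a v1) -> (forall b, v3 <> c2scal b v2) ->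
  s1 = s2.
Proof.
  intros F1 F2 F3 Hd Hv31 Hv32.
  set (a := (c2det v3 v2 / c2det v1 v2)%C). set (b := (c2det v1 v3 / c2det v1 v2)%C).
  assert (Hv3 : v3 = c2add (c2scal a v1) (c2scal b v2)) by (apply c2det_decomp; exact Hd).
  assert (Ha : a <> 0%C).
  { intros E. apply (Hv32 b). rewrite Hv3 at 1. rewrite E. c2ring. }
  assert (Hb : b <> 0%C).
  { intros E. apply (Hv31 a). rewrite Hv3 at 1. rewrite E. c2ring. }
  set (X := c2add (c2scal (cconj_if s1 a) X1) (c2scal (cconj_if s2 b) X2)).
  assert (HX3 : X3 = X).
  { apply iso_inj. rewrite <- (c2scal1 X3), F3, cconj_if_real, c2scal1. unfold X.
    rewrite (twisted_comb s1 s2 X1 X2 v1 v2), !cconj_if_invol by assumption. exact Hv3. }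
  (* compute T (i X3) in two ways and compare coordinates in the basis v1, v2 *)
  assert (G := F3 Ci). rewrite HX3 in G.
  replace (c2scal Ci X) with (c2add (c2scal (Ci * cconj_if s1 a)%C X1) (c2scal (Ci * cconj_if s2 b)%C X2))
    in G by (unfold X; c2ring).
  rewrite (twisted_comb s1 s2 X1 X2 v1 v2), !cconj_if_mult, !cconj_if_invol, Hv3 in G by assumption.
  assert (Z : c2add (c2scal ((cconj_if s1 Ci - cconj_if s3 Ci) * a)%C v1)
                    (c2scal ((cconj_if s2 Ci - cconj_if s3 Ci) * b)%C v2) = c2zero).
  { transitivity (c2sub (c2add (c2scal (cconj_if s1 Ci * a)%C v1) (c2scal (cconj_if s2 Ci * b)%C v2))
                        (c2scal (cconj_if s3 Ci) (c2add (c2scal a v1) (c2scal b v2)))).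
    - unfold c2sub. c2ring.
    - rewrite G. unfold c2sub. c2ring. }
  apply c2det_indep in Z as [Z1 Z2]; [| exact Hd].
  apply Cmult_sub_eq0 in Z1, Z2; auto.
  apply cconj_if_Ci_inj. congruence.
Qed.

Lemma iso_semilinear_of_basis (s : bool) (X1 X2 v1 v2 : C2) :
  (forall c, T (c2scal c X1) = c2scal (cconj_if s c) v1) ->
  (forall c, T (c2scal c X2) = c2scal (cconj_if s c) v2) ->
  c2det v1 v2 <> 0%C ->
  forall (l : C) (X : C2), T (c2scal l X) = c2scal (cconj_if s l) (T X).
Proof.
  intros F1 F2 Hd l X.
  set (p := (c2det (T X) v2 / c2det v1 v2)%C). set (q := (c2det v1 (T X) / c2det v1 v2)%C).
  assert (HX : T X = c2add (c2scal p v1) (c2scal q v2)) by (apply c2det_decomp; exact Hd).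
  assert (E : X = c2add (c2scal (cconj_if s p) X1) (c2scal (cconj_if s q) X2)).
  { apply iso_inj. rewrite (twisted_comb s s X1 X2 v1 v2), !cconj_if_invol by assumption.
    exact HX. }
  rewrite E at 1.
  replace (c2scal l (c2add (c2scal (cconj_if s p) X1) (c2scal (cconj_if s q) X2)))
    with (c2add (c2scal (l * cconj_if s p)%C X1) (c2scal (l * cconj_if s q)%C X2)) by c2ring.
  rewrite (twisted_comb s s X1 X2 v1 v2), HX, !cconj_if_mult, !cconj_if_invol by assumption.
  c2ring.
Qed.

Lemma iso_semilinear_of_lines (U L1 L2 L3 : C2 -> Prop) :
  (forall (c : C) (X : C2), U X -> U (c2scal c X)) ->
  complex_line L1 -> complex_line L2 -> complex_line L3 -> L1 <> L2 -> L1 <> L3 -> L2 <> L3 ->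
  (forall Y, union3 L1 L2 L3 Y <-> exists X, U X /\ T X = Y) ->
  exists s, forall (l : C) (X : C2), T (c2scal l X) = c2scal (cconj_if s l) (T X).
Proof.
  intros HU l1 l2 l3 n12 n13 n23 Himg.
  destruct (complex_line_nonzero L1 l1) as [v1 [Hv1 Hv10]].
  destruct (complex_line_nonzero L2 l2) as [v2 [Hv2 Hv20]].
  destruct (complex_line_nonzero L3 l3) as [v3 [Hv3 Hv30]].
  destruct (iso_line_twist U L1 L2 L3 v1) as [X1 [s1 F1]]; auto.
  destruct (iso_line_twist U L2 L1 L3 v2) as [X2 [s2 F2]]; auto.
  { intros Y. rewrite <- Himg. unfold union3. tauto. }
  destruct (iso_line_twist U L3 L1 L2 v3) as [X3 [s3 F3]]; auto.
  { intros Y. rewrite <- Himg. unfold union3. tauto. }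
  assert (Hd : c2det v1 v2 <> 0%C) by (apply (complex_line_det L1 L2); assumption).
  assert (Hs : s1 = s2).
  { apply (iso_twists_agree s1 s2 s3 X1 X2 X3 v1 v2 v3); auto;
      intros a E; apply Hv30; [apply (complex_line_meet L1 L3) | apply (complex_line_meet L2 L3)];
      auto; rewrite E; apply complex_line_subspace; assumption. }
  subst s2. exists s1. exact (iso_semilinear_of_basis s1 X1 X2 v1 v2 F1 F2 Hd).
Qed.

End Isometry.

Theorem lemma5 (D1 D2 : C2 -> Prop)
  (L11 L12 L13 L21 L22 L23 : C2 -> Prop) (T : C2 -> C2) :
  is_domain D1 -> bounded_set D1 -> balanced D1 ->
  is_domain D2 -> bounded_set D2 -> balanced D2 ->
  complex_line L11 -> complex_line L12 -> complex_line L13 ->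
  L11 <> L12 -> L11 <> L13 -> L12 <> L13 ->
  complex_line L21 -> complex_line L22 -> complex_line L23 ->
  L21 <> L22 -> L21 <> L23 -> L22 <> L23 ->
  R_linear T ->
  (forall X, minkowski D1 X = minkowski D2 (T X)) ->
  (forall Y, (L21 Y \/ L22 Y \/ L23 Y) <->
             exists X, (L11 X \/ L12 X \/ L13 X) /\ T X = Y) ->
  C_linear T \/ anti_C_linear T.
Proof.
  intros HD1 Hb1 HB1 HD2 Hb2 HB2 l11 l12 l13 _ _ _ l21 l22 l23 n12 n13 n23 HT Hmu Himg.
  assert (Hiso : forall X, gauge D1 X = gauge D2 (T X)) by (intros X; unfold gauge; rewrite Hmu; reflexivity).
  assert (HU : forall (c : C) (X : C2), union3 L11 L12 L13 X -> union3 L11 L12 L13 (c2scal c X)).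
  { intros c X [H | [H | H]]; [left | right; left | right; right];
      apply complex_line_subspace; assumption. }
  destruct (iso_semilinear_of_lines (gauge D1) (gauge D2) T (gauge_scal D1 HD1 HB1)
              (gauge_scal D2 HD2 HB2) (gauge_pos D1 HD1 Hb1 HB1) HT Hiso
              (union3 L11 L12 L13) L21 L22 L23) as [[|] Hs]; auto.
  - right. split; [apply HT | exact Hs].
  - left. split; [apply HT | exact Hs].
Qed.
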